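(* Fix $\zeta\in Z$ and let $(k_c,k_e)$ be a pair of monotone decreasing kinetic functions (as defined in the context), with associated numbers $\tau_\ell^{sc}$ and $\tau_v^{sc}:=k_c(\tau_\ell^{sc})$. (a) For every fixed $\tau_R\in(\tau_v^{\min},\tau_v^{sc}]$ there exists a unique $\hat\tau\in\mathcal A_\ell$ such that $$p'(\tau_R)=\frac{p(\tau_R)-p(\hat\tau)-\zeta}{\tau_R-\hat\tau},$$ or equivalently $c(\tau_R)=s_c(\hat\tau,\tau_R)$. Moreover $\hat\tau\in(\tau_\ell^{\min},\tau_\ell^{sc}]$. (b) For every fixed $\tau_R>\tau_v^{sc}$ there exists a unique $\check\tau$ in the domain $[\tau_\ell^{sc},\tau_\ell^{sat}]\subset\mathcal A_\ell$ of $k_c$ such that $$\frac{p(k_c(\check\tau))-p(\check\tau)-\zeta}{k_c(\check\tau)-\check\tau}=\frac{p(\tau_R)-p(\check\tau)-\zeta}{\tau_R-\check\tau},$$ or equivalently $s_c(\check\tau,k_c(\check\tau))=s_c(\check\tau,\tau_R)$. Moreover $\check\tau\in(\tau_\ell^{sc},\tau_\ell^{sat})$.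
   Context: Thermodynamic setting. Fix real numbers $0<\tau_\ell^{\min}<\tau_\ell^{\max}<\tau_v^{\min}$ and $\zeta^{\min}<0<\zeta^{\max}$. Set $\mathcal A_\ell=(\tau_\ell^{\min},\tau_\ell^{\max})$, $\mathcal A_v=(\tau_v^{\min},\infty)$ and $Z=(\zeta^{\min},\zeta^{\max})$. Let $p\in C^2(\mathcal A_\ell\cup\mathcal A_v)$ and $\psi,\mu\in C^3(\mathcal A_\ell\cup\mathcal A_v)$ with $p=-\psi'$ and $\mu=\psi+p\tau$. Assume: (H1) $p'<0$; (H2) $p''>0$ on $\mathcal A_\ell\cup\mathcal A_v$; (H3) for every $\zeta\in Z$ there exist $\tau_\ell^{sat}(\zeta)\in\mathcal A_\ell$, $\tau_v^{sat}(\zeta)\in\mathcal A_v$ with $p(\tau_v^{sat})-p(\tau_\ell^{sat})=\zeta$, $\mu(\tau_v^{sat})=\mu(\tau_\ell^{sat})$; (H4) $p(\tau)\to\infty$ as $\tau\to\tau_\ell^{\min}$; (H5) $p'(\tau_\ell)<p'(\tau_v)$ for all $\tau_\ell\in\mathcal A_\ell,\tau_v\in\mathcal A_v$; (H6) $\int_{\tau_v^{\min}}^R c\,d\tau\to\infty$ as $R\to\infty$, where $c(\tau)=\sqrt{-p'(\tau)}$. For the fixed $\zeta$ write $\tau_\ell^{sat}=\tau_\ell^{sat}(\zeta)$, $\tau_v^{sat}=\tau_v^{sat}(\zeta)$. Speeds: $s_e(\tau_\ell,\tau_v)=-\sqrt{\frac{\zeta-p(\tau_v)+p(\tau_\ell)}{\tau_v-\tau_\ell}}$,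 $s_c(\tau_\ell,\tau_v)=+\sqrt{\frac{\zeta-p(\tau_v)+p(\tau_\ell)}{\tau_v-\tau_\ell}}$. Driving force: $f(\tau_\ell,\tau_v)=\psi(\tau_v)-\psi(\tau_\ell)+(\tau_v-\tau_\ell)\frac{p(\tau_\ell)+p(\tau_v)}2+\zeta\frac{\tau_\ell+\tau_v}2$. Pair of monotone decreasing kinetic functions: given numbers $\tau_\ell^{sc}\in(\tau_\ell^{\min},\tau_\ell^{sat})$, $\tau_v^{se}\in(\tau_v^{\min},\infty)$ and differentiable functions $k_c:[\tau_\ell^{sc},\tau_\ell^{sat}]\to\mathcal A_v$, $k_e:[\tau_v^{sat},\tau_v^{se}]\to\mathcal A_\ell$ such that $k_c'\le0$, $k_e'\le0$; $f(\tau_\ell,k_c(\tau_\ell))\ge0$ for all $\tau_\ell\in[\tau_\ell^{sc},\tau_\ell^{sat}]$ and $f(k_e(\tau_v),\tau_v)\le0$ for all $\tau_v\in[\tau_v^{sat},\tau_v^{se}]$; $k_c(\tau_\ell^{sat})=\tau_v^{sat}$, $k_c(\tau_\ell^{sc})=\tau_v^{sc}$ with $|s_c(\tau_\ell^{sc},\tau_v^{sc})|=c(\tau_v^{sc})$; $k_e(\tau_v^{sat})=\tau_\ell^{sat}$, $k_e(\tau_v^{se})=\tau_\ell^{se}$ with $|s_e(\tau_\ell^{se},\tau_v^{se})|=c(\tau_v^{se})$, and $k_e'(\tau_v^{se})=0$. *)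

From Stdlib Require Import Reals.
From Coquelicot Require Import Coquelicot.
Open Scope R_scope.

Definition Al (tlmin tlmax t : R) : Prop := tlmin < t < tlmax.
Definition Av (tvmin t : R) : Prop := tvmin < t.
Definition Dom (tlmin tlmax tvmin t : R) : Prop := Al tlmin tlmax t \/ Av tvmin t.

Definition C2_on (D : R -> Prop) (f : R -> R) : Prop :=
  forall t, D t -> ex_derive f t /\ ex_derive (Derive f) t /\ continuous (Derive_n f 2) t.
Definition C3_on (D : R -> Prop) (f : R -> R) : Prop :=
  forall t, D t -> ex_derive f t /\ ex_derive (Derive f) t /\
    ex_derive (Derive_n f 2) t /\ continuous (Derive_n f 3) t.

Definition mu (p psi : R -> R) (t : R) : R := psi t + p t * t.
Definition cs (p : R -> R) (t : R) : R := sqrt (- Derive p t).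
Definition s_e (p : R -> R) (z tl tv : R) : R := - sqrt ((z - p tv + p tl) / (tv - tl)).
Definition s_c (p : R -> R) (z tl tv : R) : R := sqrt ((z - p tv + p tl) / (tv - tl)).
Definition drive (p psi : R -> R) (z tl tv : R) : R :=
  psi tv - psi tl + (tv - tl) * ((p tl + p tv) / 2) + z * ((tl + tv) / 2).

(* Standing thermodynamic assumptions (H1)-(H6); tlsat, tvsat are the
   saturation-state functions of zeta from (H3). *)
Definition thermo_setting (tlmin tlmax tvmin zmin zmax : R) (p psi tlsat tvsat : R -> R) : Prop :=
  0 < tlmin /\ tlmin < tlmax /\ tlmax < tvmin /\ zmin < 0 /\ 0 < zmax /\
  C2_on (Dom tlmin tlmax tvmin) p /\
  C3_on (Dom tlmin tlmax tvmin) psi /\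
  C3_on (Dom tlmin tlmax tvmin) (mu p psi) /\
  (forall t, Dom tlmin tlmax tvmin t -> Derive psi t = - p t) /\
  (forall t, Dom tlmin tlmax tvmin t -> Derive p t < 0) /\
  (forall t, Dom tlmin tlmax tvmin t -> Derive (Derive p) t > 0) /\
  (forall z, zmin < z < zmax ->
              Al tlmin tlmax (tlsat z) /\ Av tvmin (tvsat z) /\
              p (tvsat z) - p (tlsat z) = z /\
              mu p psi (tvsat z) = mu p psi (tlsat z)) /\
  filterlim p (at_right tlmin) (Rbar_locally p_infty) /\
  (forall tl tv, Al tlmin tlmax tl -> Av tvmin tv -> Derive p tl < Derive p tv) /\
  (* H6: the (possibly improper, nonnegative integrand) integral from tvmin to R of c
         tends to +oo as R -> +oo *)
  (forall M, exists R0, forall Rr, R0 <= Rr ->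
      exists a, tvmin < a < Rr /\ M < RInt (cs p) a Rr).

Definition kinetic_pair (tlmin tlmax tvmin : R) (p psi : R -> R) (z tlsat tvsat : R)
  (tlsc tvsc tvse tlse : R) (kc ke : R -> R) : Prop :=
  tlmin < tlsc < tlsat /\ tvmin < tvse /\ tvsat <= tvse /\
  (forall x, tlsc <= x <= tlsat ->
     ex_derive kc x /\ Derive kc x <= 0 /\ Av tvmin (kc x) /\ drive p psi z x (kc x) >= 0) /\
  (forall x, tvsat <= x <= tvse ->
     ex_derive ke x /\ Derive ke x <= 0 /\ Al tlmin tlmax (ke x) /\ drive p psi z (ke x) x <= 0) /\
  kc tlsat = tvsat /\ kc tlsc = tvsc /\ Rabs (s_c p z tlsc tvsc) = cs p tvsc /\
  ke tvsat = tlsat /\ ke tvse = tlse /\ Rabs (s_e p z tlse tvse) = cs p tvse /\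
  Derive ke tvse = 0.

(* (a) The root is where the tangent to p at tR meets the graph of p + z, i.e. a
   zero of the gap t |-> p tR + p'(tR) (t - tR) - p t - z.  On the liquid branch
   this gap is strictly increasing, because p' there lies below every vapour
   slope (H5); it tends to -oo at tlmin by (H4); and it is nonnegative at tlsc,
   since the sonic condition makes the line through (tlsc, p tlsc + z) tangent
   to p at tvsc and p is convex on the vapour branch.
   (b) Replace the tangent at tR by the chord of p from kc t to tR.  Chord slopes
   of a convex function increase with the left endpoint and kc is nonincreasing,
   so the gap is again strictly increasing in t; it is negative at tlsc (the
   chord from tvsc is steeper than the tangent there) and positive at tlsat
   (where p tvsat - p tlsat = z and the chord has negative slope).
   In both cases the intermediate value theorem gives the root and strict
   monotonicity its uniqueness. *)

From Stdlib Require Import Reals Lra.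
From Coquelicot Require Import Coquelicot.
Open Scope R_scope.

Lemma MVT_Derive (f : R -> R) a b : a < b ->
  (forall x, a <= x <= b -> ex_derive f x) ->
  exists c, a < c < b /\ f b - f a = Derive f c * (b - a).
Proof.
  intros Hab Hd.
  destruct (MVT_cor2 f (Derive f) a b Hab) as [c [Hc1 Hc2]].
  - intros c Hc. apply is_derive_Reals, Derive_correct, Hd; lra.
  - exists c; split; assumption.
Qed.

Lemma increment_lt_of_Derive_lt (f : R -> R) k a b : a < b ->
  (forall x, a <= x <= b -> ex_derive f x) ->
  (forall x, a < x < b -> Derive f x < k) ->
  f b - f a < k * (b - a).
Proof.
  intros Hab Hd Hk.
  destruct (MVT_Derive f a b Hab Hd) as [c [Hc ->]].
  apply Rmult_lt_compat_r; [lra | apply Hk; exact Hc].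
Qed.

Lemma increment_gt_of_Derive_gt (f : R -> R) k a b : a < b ->
  (forall x, a <= x <= b -> ex_derive f x) ->
  (forall x, a < x < b -> k < Derive f x) ->
  k * (b - a) < f b - f a.
Proof.
  intros Hab Hd Hk.
  destruct (MVT_Derive f a b Hab Hd) as [c [Hc ->]].
  apply Rmult_lt_compat_r; [lra | apply Hk; exact Hc].
Qed.

Lemma increasing_of_Derive_pos (f : R -> R) a :
  (forall x, a < x -> ex_derive f x /\ 0 < Derive f x) ->
  forall x y, a < x -> x < y -> f x < f y.
Proof.
  intros Hf x y Hx Hxy.
  enough (0 * (y - x) < f y - f x) by lra.
  apply increment_gt_of_Derive_gt; [exact Hxy | |]; intros t Ht; apply Hf; lra.
Qed.

Lemma nonincreasing_of_Derive_nonpos (f : R -> R) a b :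
  (forall x, a <= x <= b -> ex_derive f x /\ Derive f x <= 0) ->
  forall x y, a <= x -> x <= y -> y <= b -> f y <= f x.
Proof.
  intros Hf x y Hx Hxy Hy.
  destruct (Req_dec x y) as [<- | Hne]; [lra |].
  destruct (MVT_Derive f x y) as [c [Hc E]]; [lra | intros t Ht; apply Hf; lra |].
  assert (Derive f c <= 0) by (apply Hf; lra).
  assert (Derive f c * (y - x) <= 0) by (apply Rmult_le_0_r; lra).
  lra.
Qed.

Lemma increasing_unique_root (I : R -> Prop) (f : R -> R) a b : a < b ->
  (forall x, a <= x <= b -> I x /\ ex_derive f x) ->
  (forall x y, I x -> I y -> x < y -> f x < f y) ->
  f a < 0 -> 0 <= f b ->
  exists c, a < c <= b /\ f c = 0 /\ (forall t, I t -> f t = 0 -> t = c).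
Proof.
  intros Hab Hf Hincr Ha Hb.
  assert (Hroot : exists c, a < c <= b /\ f c = 0).
  { destruct (Req_dec (f b) 0) as [E | E]; [exists b; split; [lra | exact E] |].
    destruct (Ranalysis5.IVT_interv f a b) as [c [Hc Ec]]; [| lra | lra | lra |].
    - intros x Hx. apply continuity_pt_filterlim. apply (ex_derive_continuous f), Hf, Hx.
    - exists c. split; [| exact Ec].
      destruct (Req_dec c a) as [-> | Hca]; lra. }
  destruct Hroot as [c [Hc Ec]].
  assert (Ic : I c) by (apply Hf; lra).
  exists c. split; [exact Hc | split; [exact Ec |]].
  intros t It Et.
  destruct (Rtotal_order t c) as [L | [L | L]]; [| exact L |].
  - specialize (Hincr t c It Ic L). lra.
  - specialize (Hincr c t Ic It L). lra.
Qed.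

Lemma unbounded_near_right (f : R -> R) a b :
  filterlim f (at_right a) (Rbar_locally p_infty) -> a < b ->
  forall M, exists x, a < x < b /\ M < f x.
Proof.
  intros Hf Hab M.
  assert (Hlt_b : at_right a (fun x => x < b)).
  { exists (mkposreal _ (proj2 (Rlt_0_minus a b) Hab)). intros y Hy _.
    apply (Rabs_lt_between' y a) in Hy. simpl in Hy. lra. }
  assert (HM : at_right a (fun x => M < f x)) by (apply Hf; exists M; tauto).
  assert (Hgt_a : at_right a (fun x => a < x)) by (exists (mkposreal 1 Rlt_0_1); tauto).
  destruct (filter_ex _ (filter_and _ _ Hgt_a (filter_and _ _ Hlt_b HM))) as (x & Hxa & Hxb & HMx).
  exists x. split; [split |]; assumption.
Qed.

Definition slope (f : R -> R) (a b : R) : R := (f b - f a) / (b - a).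

Lemma slope_mul (f : R -> R) a b : a <> b -> slope f a b * (b - a) = f b - f a.
Proof. intros H. unfold slope. field. lra. Qed.

Lemma tangency_of_sonic (p : R -> R) z tl tv : tl < tv -> Derive p tv < 0 ->
  Rabs (s_c p z tl tv) = cs p tv -> p tv - p tl - z = Derive p tv * (tv - tl).
Proof.
  intros Hlv Hneg Hsonic.
  unfold s_c, cs in Hsonic. rewrite Rabs_pos_eq in Hsonic by apply sqrt_pos.
  set (X := (z - p tv + p tl) / (tv - tl)) in Hsonic.
  destruct (Rle_or_lt X 0) as [HX | HX].
  - rewrite (sqrt_neg_0 X HX) in Hsonic.
    assert (0 < sqrt (- Derive p tv)) by (apply sqrt_lt_R0; lra). lra.
  - apply sqrt_inj in Hsonic; [| lra | lra].
    assert (E : z - p tv + p tl = - Derive p tv * (tv - tl)).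
    { rewrite <- Hsonic. unfold X. field. lra. }
    lra.
Qed.

Section Pressure.

Variables (tlmin tlmax tvmin : R) (p : R -> R).

Hypothesis liquid_below_vapour : tlmax < tvmin.
Hypothesis p_derivable_liquid : forall t, tlmin < t < tlmax -> ex_derive p t.
Hypothesis p_derivable_vapour : forall t, tvmin < t -> ex_derive p t.
Hypothesis Derive_p_neg_vapour : forall t, tvmin < t -> Derive p t < 0.
Hypothesis Derive_p_increasing_vapour :
  forall a b, tvmin < a -> a < b -> Derive p a < Derive p b.
Hypothesis Derive_p_liquid_lt_vapour :
  forall a b, Al tlmin tlmax a -> Av tvmin b -> Derive p a < Derive p b.

Definition tangent_gap (z tR t : R) : R := p tR + Derive p tR * (t - tR) - p t - z.
Definition chord_gap (z v tR t : R) : R := p tR + slope p v tR * (t - tR) - p t - z.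

Lemma vapour_increment_lt a b : tvmin < a -> a < b -> p b - p a < Derive p b * (b - a).
Proof.
  intros Ha Hab. apply increment_lt_of_Derive_lt; [exact Hab | |].
  - intros x Hx. apply p_derivable_vapour. lra.
  - intros x Hx. apply Derive_p_increasing_vapour; lra.
Qed.

Lemma vapour_increment_gt a b : tvmin < a -> a < b -> Derive p a * (b - a) < p b - p a.
Proof.
  intros Ha Hab. apply increment_gt_of_Derive_gt; [exact Hab | |].
  - intros x Hx. apply p_derivable_vapour. lra.
  - intros x Hx. apply Derive_p_increasing_vapour; lra.
Qed.

Lemma Derive_lt_slope_vapour a b : tvmin < a -> a < b -> Derive p a < slope p a b.
Proof.
  intros Ha Hab. apply (Rmult_lt_reg_r (b - a)); [lra |].
  rewrite slope_mul by lra. apply vapour_increment_gt; assumption.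
Qed.

Lemma slope_lt_Derive_vapour a b : tvmin < a -> a < b -> slope p a b < Derive p b.
Proof.
  intros Ha Hab. apply (Rmult_lt_reg_r (b - a)); [lra |].
  rewrite slope_mul by lra. apply vapour_increment_lt; assumption.
Qed.

Lemma slope_increasing_vapour v1 v2 tR : tvmin < v1 -> v1 < v2 -> v2 < tR ->
  slope p v1 tR < slope p v2 tR.
Proof.
  intros Hv1 H12 H2R.
  assert (Hleft := vapour_increment_lt v1 v2 Hv1 H12).
  assert (Hright := Derive_lt_slope_vapour v2 tR ltac:(lra) H2R).
  assert (E1 := slope_mul p v1 tR ltac:(lra)).
  assert (E2 := slope_mul p v2 tR ltac:(lra)).
  apply (Rmult_lt_reg_r (tR - v1)); [lra |].
  assert (Derive p v2 * (v2 - v1) < slope p v2 tR * (v2 - v1))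
    by (apply Rmult_lt_compat_r; lra).
  lra.
Qed.

Lemma liquid_increment_lt t1 t2 v k : tlmin < t1 -> t1 < t2 -> t2 < tlmax ->
  tvmin < v -> Derive p v <= k -> p t2 - p t1 < k * (t2 - t1).
Proof.
  intros H1 H12 H2 Hv Hk. apply increment_lt_of_Derive_lt; [exact H12 | |].
  - intros x Hx. apply p_derivable_liquid. lra.
  - intros x Hx. apply Rlt_le_trans with (Derive p v); [| exact Hk].
    apply Derive_p_liquid_lt_vapour; unfold Al, Av; lra.
Qed.

Lemma tangent_gap_increasing_liquid z tR t1 t2 : tvmin < tR ->
  Al tlmin tlmax t1 -> Al tlmin tlmax t2 -> t1 < t2 ->
  tangent_gap z tR t1 < tangent_gap z tR t2.
Proof.
  unfold Al, tangent_gap. intros HR H1 H2 H12.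
  assert (p t2 - p t1 < Derive p tR * (t2 - t1))
    by (apply liquid_increment_lt with tR; lra).
  lra.
Qed.

Lemma chord_gap_increasing_liquid z v1 v2 tR t1 t2 :
  tvmin < v2 -> v2 <= v1 -> v1 < tR -> tlmin < t1 -> t1 < t2 -> t2 < tlmax ->
  chord_gap z v1 tR t1 < chord_gap z v2 tR t2.
Proof.
  unfold chord_gap. intros Hv2 H21 H1R Ht1 H12 Ht2.
  assert (Hs : slope p v2 tR <= slope p v1 tR).
  { destruct (Req_dec v2 v1) as [-> | Hne]; [lra |].
    apply Rlt_le, slope_increasing_vapour; lra. }
  assert (p t2 - p t1 < slope p v2 tR * (t2 - t1)).
  { apply liquid_increment_lt with v2; try lra.
    apply Rlt_le, Derive_lt_slope_vapour; lra. }
  assert (0 <= (slope p v1 tR - slope p v2 tR) * (tR - t1))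
    by (apply Rmult_le_pos; lra).
  lra.
Qed.

Lemma tangent_gap_nonneg_of_tangency z tl tv tR : tl < tR -> tvmin < tR -> tR <= tv ->
  p tv - p tl - z = Derive p tv * (tv - tl) -> 0 <= tangent_gap z tR tl.
Proof.
  unfold tangent_gap. intros HlR HR HRv Htan.
  destruct (Req_dec tR tv) as [-> | Hne]; [lra |].
  assert (p tv - p tR < Derive p tv * (tv - tR)) by (apply vapour_increment_lt; lra).
  assert (Derive p tR < Derive p tv) by (apply Derive_p_increasing_vapour; lra).
  assert (0 < (Derive p tv - Derive p tR) * (tR - tl)) by (apply Rmult_lt_0_compat; lra).
  lra.
Qed.

Lemma chord_gap_through z v tR t : v <> tR ->
  chord_gap z v tR t = p v - p t - z - slope p v tR * (v - t).
Proof. intros Hne. unfold chord_gap. pose proof (slope_mul p v tR ltac:(lra)). lra. Qed.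

Lemma chord_gap_neg_of_tangency z tl tv tR : tl < tv -> tvmin < tv -> tv < tR ->
  p tv - p tl - z = Derive p tv * (tv - tl) -> chord_gap z tv tR tl < 0.
Proof.
  intros Hlv Hv HvR Htan. rewrite chord_gap_through by lra.
  assert (Derive p tv < slope p tv tR) by (apply Derive_lt_slope_vapour; lra).
  assert (0 < (slope p tv tR - Derive p tv) * (tv - tl)) by (apply Rmult_lt_0_compat; lra).
  lra.
Qed.

Lemma chord_gap_pos_of_saturation z tl tv tR : tl < tv -> tvmin < tv -> tv < tR ->
  p tv - p tl = z -> 0 < chord_gap z tv tR tl.
Proof.
  intros Hlv Hv HvR Hsat. rewrite chord_gap_through by lra.
  assert (slope p tv tR < Derive p tR) by (apply slope_lt_Derive_vapour; lra).
  assert (Derive p tR < 0) by (apply Derive_p_neg_vapour; lra).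
  assert (0 < - slope p tv tR * (tv - tl)) by (apply Rmult_lt_0_compat; lra).
  lra.
Qed.


Lemma tangent_gap_eq0 z tR t : t <> tR ->
  (Derive p tR = (p tR - p t - z) / (tR - t) <-> tangent_gap z tR t = 0).
Proof.
  intros Hne. unfold tangent_gap. split; intros H.
  - rewrite H. field. lra.
  - replace (p tR - p t - z) with (Derive p tR * (tR - t)) by lra. field. lra.
Qed.

Lemma chord_gap_eq0 z v tR t : t < v -> v < tR ->
  (chord_gap z v tR t = 0 <-> (p v - p t - z) / (v - t) = (p tR - p t - z) / (tR - t)).
Proof.
  intros Htv HvR.
  assert (key : (p v - p t - z) / (v - t) - (p tR - p t - z) / (tR - t)
                = chord_gap z v tR t * ((tR - v) / ((v - t) * (tR - t)))).
  { unfold chord_gap, slope. field. lra. }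
  assert (Hpos : 0 < (tR - v) / ((v - t) * (tR - t)))
    by (apply Rdiv_lt_0_compat; [| apply Rmult_lt_0_compat]; lra).
  split; intros E.
  - rewrite E, Rmult_0_l in key. lra.
  - rewrite E, Rminus_diag in key.
    destruct (Rmult_integral _ _ (eq_sym key)); lra.
Qed.

Hypothesis p_unbounded_at_tlmin : filterlim p (at_right tlmin) (Rbar_locally p_infty).

Lemma exists_unique_tangent_liquid_state z tl tv tR :
  tlmin < tl < tlmax -> tvmin < tR <= tv ->
  p tv - p tl - z = Derive p tv * (tv - tl) ->
  exists th,
    (Al tlmin tlmax th /\ Derive p tR = (p tR - p th - z) / (tR - th)) /\
    (forall t, Al tlmin tlmax t -> Derive p tR = (p tR - p t - z) / (tR - t) -> t = th) /\
    tlmin < th <= tl.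
Proof.
  intros Hl HR Htan.
  destruct (unbounded_near_right p tlmin tl p_unbounded_at_tlmin ltac:(lra)
              (p tR + Derive p tR * (tlmin - tR) - z)) as [a [Ha Hpa]].
  assert (Hgap_a : tangent_gap z tR a < 0).
  { assert (Derive p tR < 0) by (apply Derive_p_neg_vapour; lra).
    assert (Derive p tR * (a - tR) < Derive p tR * (tlmin - tR))
      by (apply Rmult_lt_gt_compat_neg_l; lra).
    unfold tangent_gap. lra. }
  destruct (increasing_unique_root (Al tlmin tlmax) (tangent_gap z tR) a tl)
    as (th & Hth & Eth & Huniq).
  - lra.
  - intros x Hx. split; [unfold Al; lra |].
    assert (ex_derive p x) by (apply p_derivable_liquid; lra).
    unfold tangent_gap. auto_derive. tauto.
  - intros x y. apply tangent_gap_increasing_liquid. lra.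
  - exact Hgap_a.
  - apply tangent_gap_nonneg_of_tangency with tv; lra.
  - exists th. unfold Al in *. split; [split; [lra | apply tangent_gap_eq0; lra] | split; [| lra]].
    intros t Ht E. apply Huniq; [exact Ht |]. apply tangent_gap_eq0 in E; [exact E | lra].
Qed.

Lemma exists_unique_collinear_liquid_state z tl tls tv tR (kc : R -> R) :
  tlmin < tl -> tl < tls -> tls < tlmax -> tv < tR ->
  (forall t, tl <= t <= tls -> ex_derive kc t /\ Derive kc t <= 0 /\ Av tvmin (kc t)) ->
  kc tl = tv -> p tv - p tl - z = Derive p tv * (tv - tl) -> p (kc tls) - p tls = z ->
  exists tc,
    (tl <= tc <= tls /\
     (p (kc tc) - p tc - z) / (kc tc - tc) = (p tR - p tc - z) / (tR - tc)) /\
    (forall t, tl <= t <= tls ->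
       (p (kc t) - p t - z) / (kc t - t) = (p tR - p t - z) / (tR - t) -> t = tc) /\
    tl < tc < tls.
Proof.
  intros Hl Hlls Hls HvR Hkc Hkc_tl Htan Hsat. unfold Av in Hkc.
  assert (Hkc_mono := nonincreasing_of_Derive_nonpos kc tl tls
                        ltac:(intros t Ht; split; apply Hkc, Ht)).
  assert (Hkc_range : forall t, tl <= t <= tls -> tvmin < kc t < tR).
  { intros t Ht. split; [apply Hkc, Ht |].
    assert (kc t <= kc tl) by (apply Hkc_mono; lra). lra. }
  set (gap := fun t => chord_gap z (kc t) tR t).
  assert (Hgap_sat : 0 < gap tls).
  { destruct (Hkc_range tls) as [Hv Hv']; [lra |].
    apply chord_gap_pos_of_saturation; [lra | exact Hv | exact Hv' | exact Hsat]. }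
  destruct (increasing_unique_root (fun t => tl <= t <= tls) gap tl tls)
    as (tc & Htc & Etc & Huniq).
  - exact Hlls.
  - intros x Hx. split; [exact Hx |].
    destruct (Hkc_range x Hx). destruct (Hkc x Hx) as (Hdk & _).
    assert (ex_derive p (kc x)) by (apply p_derivable_vapour; lra).
    assert (ex_derive p x) by (apply p_derivable_liquid; lra).
    unfold gap, chord_gap, slope. auto_derive. repeat split; auto; lra.
  - intros x y Hx Hy Hxy. destruct (Hkc_range x Hx), (Hkc_range y Hy).
    apply chord_gap_increasing_liquid; try lra. apply Hkc_mono; lra.
  - destruct (Hkc_range tl) as [Hv Hv']; [lra |]. rewrite Hkc_tl in Hv, Hv'.
    unfold gap. rewrite Hkc_tl. apply chord_gap_neg_of_tangency; lra.
  - lra.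
  - assert (tc <> tls) by (intros ->; lra).
    exists tc. destruct (Hkc_range tc) as [Hv Hv']; [lra |].
    split; [split; [lra | apply chord_gap_eq0; [lra | lra | exact Etc]] | split; [| lra]].
    intros t Ht E. destruct (Hkc_range t Ht).
    apply Huniq; [exact Ht |]. apply chord_gap_eq0 in E; [exact E | lra | lra].
Qed.

End Pressure.

Theorem lemma3p5 (tlmin tlmax tvmin zmin zmax : R) (p psi tlsat tvsat : R -> R)
  (z tlsc tvsc tvse tlse : R) (kc ke : R -> R) :
  thermo_setting tlmin tlmax tvmin zmin zmax p psi tlsat tvsat ->
  zmin < z < zmax ->
  kinetic_pair tlmin tlmax tvmin p psi z (tlsat z) (tvsat z) tlsc tvsc tvse tlse kc ke ->
  (forall tR, tvmin < tR <= tvsc ->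
     exists th,
       (Al tlmin tlmax th /\ Derive p tR = (p tR - p th - z) / (tR - th)) /\
       (forall t, Al tlmin tlmax t -> Derive p tR = (p tR - p t - z) / (tR - t) -> t = th) /\
       tlmin < th <= tlsc) /\
  (forall tR, tvsc < tR ->
     exists tc,
       (tlsc <= tc <= tlsat z /\
        (p (kc tc) - p tc - z) / (kc tc - tc) = (p tR - p tc - z) / (tR - tc)) /\
       (forall t, tlsc <= t <= tlsat z ->
          (p (kc t) - p t - z) / (kc t - t) = (p tR - p t - z) / (tR - t) -> t = tc) /\
       tlsc < tc < tlsat z).
Proof.
  intros HT Hz HK.
  destruct HT as (_ & _ & Hlv & _ & _ & HC2 & _ & _ & _ & H1 & H2 & H3 & H4 & H5 & _).
  destruct HK as (Hsc & _ & _ & Hkc & _ & Hkc_sat & Hkc_sc & Hsonic & _).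
  destruct (H3 z Hz) as (Hl_sat & _ & Hp_sat & _).
  unfold Al in Hl_sat.
  assert (Hd_liq : forall t, tlmin < t < tlmax -> ex_derive p t)
    by (intros t Ht; apply HC2; left; exact Ht).
  assert (Hd_vap : forall t, tvmin < t -> ex_derive p t)
    by (intros t Ht; apply HC2; right; exact Ht).
  assert (Hneg : forall t, tvmin < t -> Derive p t < 0)
    by (intros t Ht; apply H1; right; exact Ht).
  assert (Hincr : forall a b, tvmin < a -> a < b -> Derive p a < Derive p b).
  { apply increasing_of_Derive_pos. intros t Ht. split; [apply HC2 | apply H2]; right; exact Ht. }
  assert (Hkc' : forall t, tlsc <= t <= tlsat z ->
                   ex_derive kc t /\ Derive kc t <= 0 /\ Av tvmin (kc t))
    by (intros t Ht; destruct (Hkc t Ht) as (? & ? & ? & _); auto).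
  destruct (Hkc' tlsc) as (_ & _ & Hv_sc); [lra |]. rewrite Hkc_sc in Hv_sc. unfold Av in Hv_sc.
  assert (Htan : p tvsc - p tlsc - z = Derive p tvsc * (tvsc - tlsc))
    by (apply tangency_of_sonic; [lra | apply Hneg; exact Hv_sc | exact Hsonic]).
  split; intros tR HR.
  - apply (exists_unique_tangent_liquid_state tlmin tlmax tvmin p) with tvsc; auto; lra.
  - apply (exists_unique_collinear_liquid_state tlmin tlmax tvmin p) with tvsc; auto; try lra.
    rewrite Hkc_sat. exact Hp_sat.
Qed.
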